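(* Let $g\in\mathrm{Sp}(1,1)$. Then every element of $g\,\mathrm{SU}(1,1)\,g^{-1}$ has real trace if and only if $g\in\mathrm{Sp}(1)\cdot\mathrm{SU}(1,1)$, i.e. $g=(hI_2)u$ for some unit quaternion $h$ and some $u\in\mathrm{SU}(1,1)$.
   Context: $\mathbb H$ denotes the quaternions. $\mathrm{Sp}(1,1)=\{A\in\mathrm{GL}(2,\mathbb H): A^*I_{1,1}A=I_{1,1}\}$, with $A^*$ the conjugate transpose and $I_{1,1}=\mathrm{diag}(1,-1)$. $\mathrm{SU}(1,1)\subset\mathrm{Sp}(1,1)$ is the subgroup of complex matrices of determinant $1$ preserving $I_{1,1}$. $\mathrm{Sp}(1)$ is the group of unit quaternions, and $h\in\mathrm{Sp}(1)$ is identified with the scalar matrix $hI_2\in\mathrm{Sp}(1,1)$. The trace of a quaternionic matrix is the sum of its diagonal entries. *)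

From HB Require Import structures.
From mathcomp Require Import all_boot all_order all_algebra.
From mathcomp Require Import reals.
Set Implicit Arguments. Unset Strict Implicit. Unset Printing Implicit Defensive.
Import Order.TTheory GRing.Theory Num.Theory.
Local Open Scope ring_scope.

Section Quat.
Variable R : realType.

(** Real quaternions q = q0 + q1 i + q2 j + q3 k. *)
Record quat := Quat { q0 : R; q1 : R; q2 : R; q3 : R }.

Definition qzero : quat := Quat 0 0 0 0.
Definition qone : quat := Quat 1 0 0 0.
Definition qadd (p q : quat) : quat :=
  Quat (q0 p + q0 q) (q1 p + q1 q) (q2 p + q2 q) (q3 p + q3 q).
Definition qopp (p : quat) : quat := Quat (- q0 p) (- q1 p) (- q2 p) (- q3 p).
Definition qsub (p q : quat) : quat := qadd p (qopp q).
(** Hamilton product (i^2 = j^2 = k^2 = ijk = -1). *)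
Definition qmul (p q : quat) : quat :=
  Quat (q0 p * q0 q - q1 p * q1 q - q2 p * q2 q - q3 p * q3 q)
       (q0 p * q1 q + q1 p * q0 q + q2 p * q3 q - q3 p * q2 q)
       (q0 p * q2 q - q1 p * q3 q + q2 p * q0 q + q3 p * q1 q)
       (q0 p * q3 q + q1 p * q2 q - q2 p * q1 q + q3 p * q0 q).
Definition qconj (p : quat) : quat := Quat (q0 p) (- q1 p) (- q2 p) (- q3 p).

Definition qreal (p : quat) : Prop := q1 p = 0 /\ q2 p = 0 /\ q3 p = 0.
Definition qcomplex (p : quat) : Prop := q2 p = 0 /\ q3 p = 0.
Definition unit_quat (p : quat) : Prop :=
  q0 p ^+ 2 + q1 p ^+ 2 + q2 p ^+ 2 + q3 p ^+ 2 = 1.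

Record mat2 := Mat2 { m11 : quat; m12 : quat; m21 : quat; m22 : quat }.

Definition mmul (A B : mat2) : mat2 :=
  Mat2 (qadd (qmul (m11 A) (m11 B)) (qmul (m12 A) (m21 B)))
       (qadd (qmul (m11 A) (m12 B)) (qmul (m12 A) (m22 B)))
       (qadd (qmul (m21 A) (m11 B)) (qmul (m22 A) (m21 B)))
       (qadd (qmul (m21 A) (m12 B)) (qmul (m22 A) (m22 B))).
Definition mstar (A : mat2) : mat2 :=
  Mat2 (qconj (m11 A)) (qconj (m21 A)) (qconj (m12 A)) (qconj (m22 A)).
Definition mone : mat2 := Mat2 qone qzero qzero qone.
Definition I11 : mat2 := Mat2 qone qzero qzero (qopp qone).
Definition mscal (h : quat) : mat2 := Mat2 h qzero qzero h.
Definition mtrace (A : mat2) : quat := qadd (m11 A) (m22 A).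

(** Sp(1,1) = { A in GL(2,H) | A^* I_{1,1} A = I_{1,1} }
    (the identity forces invertibility). *)
Definition in_Sp11 (A : mat2) : Prop :=
  mmul (mmul (mstar A) I11) A = I11.

(** SU(1,1): complex matrices of determinant 1 preserving I_{1,1}.
    For complex entries the determinant is m11 m22 - m12 m21. *)
Definition in_SU11 (U : mat2) : Prop :=
  [/\ (qcomplex (m11 U) /\ qcomplex (m12 U) /\ qcomplex (m21 U) /\ qcomplex (m22 U)),
      qsub (qmul (m11 U) (m22 U)) (qmul (m12 U) (m21 U)) = qone
    & mmul (mmul (mstar U) I11) U = I11].

End Quat.

(* Both sides are invariant under g |-> h g for a unit quaternion h: this conjugates
   every trace tr(g v g^-1) by h, which preserves realness.  So we may assume that the
   corner entry a of g = [[a, b], [c, d]] is a positive real r.  Together with 1, three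
   explicit elements of SU(1,1) span its real linear span, and realness of the traces of
   their conjugates says that conj(c) commutes with d, that i conj(d) commutes with c,
   and (when c is real) that d i conj(d) = |d|^2 i.  This forces c and d, hence
   b = conj(c) d / r, to be complex, i.e. g lies in U(1,1); a complex square root of
   det(g)^-1 then moves g into SU(1,1).  Conversely, for g = h u the trace of g v g^-1
   is h tr(u v u^-1) conj(h), and complex matrices in SU(1,1) have real trace. *)

From HB Require Import structures.
From mathcomp Require Import all_boot all_order all_algebra.
From mathcomp Require Import reals ring lra.

Set Implicit Arguments. Unset Strict Implicit. Unset Printing Implicit Defensive.
Import Order.TTheory GRing.Theory Num.Theory.
Local Open Scope ring_scope.

Section Sp11Conjugation.
Variable R : realType.
Implicit Types (r : R) (p q h k e a b c d z : quat R) (g u v : mat2 R).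

Definition quatR r : quat R := Quat r 0 0 0.
Definition qi : quat R := Quat 0 1 0 0.
Definition qnorm2 p := q0 p ^+ 2 + q1 p ^+ 2 + q2 p ^+ 2 + q3 p ^+ 2.
Definition qcomm p q := qsub (qmul p q) (qmul q p).

Definition mcomplex u :=
  qcomplex (m11 u) /\ qcomplex (m12 u) /\ qcomplex (m21 u) /\ qcomplex (m22 u).
Definition mdet u := qsub (qmul (m11 u) (m22 u)) (qmul (m12 u) (m21 u)).
Definition madj u := Mat2 (m22 u) (qopp (m12 u)) (qopp (m21 u)) (m11 u).
Definition sp_inv g := mmul (mmul (I11 R) (mstar g)) (I11 R).
Definition conj_trace_real g :=
  forall v, in_SU11 v -> qreal (mtrace (mmul (mmul g v) (sp_inv g))).

Lemma quatP p q :
  q0 p = q0 q -> q1 p = q1 q -> q2 p = q2 q -> q3 p = q3 q -> p = q.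
Proof. by case: p; case: q => /= ? ? ? ? ? ? ? ? -> -> -> ->. Qed.

Lemma mat2P g u :
  m11 g = m11 u -> m12 g = m12 u -> m21 g = m21 u -> m22 g = m22 u -> g = u.
Proof. by case: g; case: u => /= ? ? ? ? ? ? ? ? -> -> -> ->. Qed.

Ltac quat_ring :=
  unfold madj, mdet, qcomm, qnorm2, quatR, qi;
  repeat match goal with
  | A : mat2 R |- _ => destruct A
  | p : quat R |- _ => destruct p
  end;
  repeat (apply: mat2P || apply: quatP); rewrite /=; ring.

Lemma qmulA p q k : qmul p (qmul q k) = qmul (qmul p q) k.
Proof. quat_ring. Qed.

Lemma qmul1q p : qmul (qone R) p = p.
Proof. quat_ring. Qed.

Lemma qnorm2_quatR r : qnorm2 (quatR r) = r ^+ 2.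
Proof. quat_ring. Qed.

Lemma qnorm2_ge0 p : 0 <= qnorm2 p.
Proof. by rewrite /qnorm2 !addr_ge0 ?sqr_ge0. Qed.

Lemma qnorm2_mul p q : qnorm2 (qmul p q) = qnorm2 p * qnorm2 q.
Proof. quat_ring. Qed.

Lemma qnorm2_conj p : qnorm2 (qconj p) = qnorm2 p.
Proof. quat_ring. Qed.

Lemma qmul_conjl p : qmul (qconj p) p = quatR (qnorm2 p).
Proof. quat_ring. Qed.

Lemma unit_quat_mul h k : unit_quat h -> unit_quat k -> unit_quat (qmul h k).
Proof.
move=> hh hk; change (qnorm2 (qmul h k) = 1); rewrite qnorm2_mul.
by change (qnorm2 h = 1) in hh; change (qnorm2 k = 1) in hk; rewrite hh hk mulr1.
Qed.

Lemma unit_quat_conj h : unit_quat h -> unit_quat (qconj h).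
Proof. by move=> hh; change (qnorm2 (qconj h) = 1); rewrite qnorm2_conj. Qed.

Lemma qreal_conjg h q : qreal q -> qreal (qmul (qmul h q) (qconj h)).
Proof.
case: h q => h0 h1 h2 h3 [q0 q1 q2 q3]; rewrite /qreal /= => -[-> [-> ->]].
by split; [|split]; ring.
Qed.

Lemma qcomplex_mul p q : qcomplex p -> qcomplex q -> qcomplex (qmul p q).
Proof.
case: p q => ? ? ? ? [? ? ? ?]; rewrite /qcomplex /= => -[-> ->] [-> ->].
by split; ring.
Qed.

Lemma qcomplex_conj p : qcomplex p -> qcomplex (qconj p).
Proof. by case: p => ? ? ? ?; rewrite /qcomplex /= => -[-> ->]; rewrite oppr0. Qed.

Lemma qcomplex_mulC p q : qcomplex p -> qcomplex q -> qmul p q = qmul q p.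
Proof.
by case: p q => ? ? ? ? [? ? ? ?]; rewrite /qcomplex /= => -[-> ->] [-> ->]; quat_ring.
Qed.

Lemma qcomplex_mulR r p : r != 0 -> qcomplex (qmul (quatR r) p) -> qcomplex p.
Proof.
move=> r0; case: p => p0 p1 p2 p3; rewrite /qcomplex /= => -[e2 e3].
by split; apply: (mulfI r0); rewrite mulr0; lra.
Qed.

Lemma qmulR_eq0 r p : r != 0 -> qmul (quatR r) p = qzero R -> p = qzero R.
Proof.
move=> r0; case: p => p0 p1 p2 p3 [e0 e1 e2 e3].
by apply: quatP => /=; apply: (mulfI r0); rewrite mulr0; lra.
Qed.

Lemma quat_unit_align p : 0 < qnorm2 p ->
  exists h, unit_quat h /\ qmul h p = quatR (Num.sqrt (qnorm2 p)).
Proof.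
move=> p0; set s := Num.sqrt (qnorm2 p).
have s0 : s != 0 by rewrite sqrtr_eq0 -ltNge.
have s2 : s ^+ 2 = qnorm2 p by rewrite sqr_sqrtr // ltW.
exists (qmul (quatR s^-1) (qconj p)); split.
  change (qnorm2 (qmul (quatR s^-1) (qconj p)) = 1).
  by rewrite qnorm2_mul qnorm2_quatR qnorm2_conj -s2 exprVn mulVf // expf_neq0.
rewrite -qmulA qmul_conjl -s2.
by apply: quatP; rewrite /= ?mul0r ?mulr0 ?subr0 ?addr0 // expr2 mulKf.
Qed.

(* e = (1 + conj z) / |1 + conj z| squares to conj z = z^-1; for z = -1 take e = i. *)
Lemma complex_unit_sqrt z : qcomplex z -> qnorm2 z = 1 ->
  exists e, [/\ qcomplex e, unit_quat e & qmul (qmul e e) z = qone R].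
Proof.
case: z => z0 z1 z2 z3 [/= -> ->]; rewrite /qnorm2 /= expr0n /= !addr0 => hz.
have [zm1 | zn1] := eqVneq z0 (-1).
  have z10 : z1 = 0 by apply/eqP; rewrite -sqrf_eq0; move: hz; rewrite zm1; lra.
  exists qi; split; [by [] | rewrite /unit_quat /=; lra |].
  by rewrite zm1 z10; quat_ring.
have z0gt : -1 < z0 by rewrite lt_neqAle eq_sym zn1 /=; nra.
set n := (1 + z0) ^+ 2 + z1 ^+ 2.
have n0 : 0 < n by rewrite /n; nra.
set s := (Num.sqrt n)^-1.
have sn : s ^+ 2 * n = 1 by rewrite /s exprVn sqr_sqrtr ?ltW // mulVf // gt_eqF.
exists (Quat (s * (1 + z0)) (- (s * z1)) 0 0); split=> //.
  by rewrite /unit_quat /= -[RHS]sn /n; ring.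
apply: quatP => /=.
- transitivity (s ^+ 2 * (n + (1 + z0) * (z0 ^+ 2 + z1 ^+ 2 - 1))); first by rewrite /n; ring.
  by rewrite hz subrr mulr0 addr0.
- transitivity (- s ^+ 2 * z1 * (z0 ^+ 2 + z1 ^+ 2 - 1)); first by ring.
  by rewrite hz subrr mulr0.
- by ring.
- by ring.
Qed.

Lemma mmulA g u v : mmul g (mmul u v) = mmul (mmul g u) v.
Proof. quat_ring. Qed.

Lemma mmul1g g : mmul (mone R) g = g.
Proof. quat_ring. Qed.

Lemma mmulg1 g : mmul g (mone R) = g.
Proof. quat_ring. Qed.

Lemma mscal_mul h k : mmul (mscal h) (mscal k) = mscal (qmul h k).
Proof. quat_ring. Qed.

Lemma mscal_mulE h g :
  mmul (mscal h) g = Mat2 (qmul h (m11 g)) (qmul h (m12 g)) (qmul h (m21 g)) (qmul h (m22 g)).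
Proof. quat_ring. Qed.

Lemma mtrace_mscal h k g :
  mtrace (mmul (mmul (mscal h) g) (mscal k)) = qmul (qmul h (mtrace g)) k.
Proof. quat_ring. Qed.

Lemma mstar_mscal h g : mstar (mmul (mscal h) g) = mmul (mstar g) (mscal (qconj h)).
Proof. quat_ring. Qed.

Lemma mscal_I11 h : unit_quat h -> mmul (mmul (mscal (qconj h)) (I11 R)) (mscal h) = I11 R.
Proof.
rewrite /unit_quat; case: h => h0 h1 h2 h3 /= hh.
by apply: mat2P; apply: quatP => /=; lra.
Qed.

Lemma I11_mul : mmul (I11 R) (I11 R) = mone R.
Proof. quat_ring. Qed.

Lemma sp_invE a b c d :
  sp_inv (Mat2 a b c d) = Mat2 (qconj a) (qopp (qconj c)) (qopp (qconj b)) (qconj d).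
Proof. rewrite /sp_inv; quat_ring. Qed.

Lemma sp_inv_mscal h g : sp_inv (mmul (mscal h) g) = mmul (sp_inv g) (mscal (qconj h)).
Proof. by case: g => a b c d; rewrite mscal_mulE !sp_invE; quat_ring. Qed.

Lemma in_Sp11_mscal h g : unit_quat h -> in_Sp11 g -> in_Sp11 (mmul (mscal h) g).
Proof.
rewrite /in_Sp11 mstar_mscal => hh gSp.
by rewrite mmulA -(mmulA (mstar g)) -(mmulA (mstar g)) mscal_I11.
Qed.

Lemma Sp11_entries a b c d : in_Sp11 (Mat2 a b c d) ->
  [/\ qnorm2 a = 1 + qnorm2 c, qnorm2 d = 1 + qnorm2 b & qmul (qconj a) b = qmul (qconj c) d].
Proof.
case: a b c d => a0 a1 a2 a3 [b0 b1 b2 b3] [c0 c1 c2 c3] [d0 d1 d2 d3].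
rewrite /in_Sp11 /qnorm2 /= => -[e11 _ _ _ e120 e121 e122 e123 _ _ _ _ e22 _ _ _].
by split; [lra | lra | apply: quatP => /=; lra].
Qed.

Lemma Sp11_norm_offdiag a b c d : in_Sp11 (Mat2 a b c d) -> qnorm2 b = qnorm2 c.
Proof.
case/Sp11_entries=> ha hd /(congr1 qnorm2).
rewrite !qnorm2_mul !qnorm2_conj ha hd; move: (qnorm2 b) (qnorm2 c) => x y; lra.
Qed.

Lemma Sp11_norm_diag a b c d : in_Sp11 (Mat2 a b c d) -> qnorm2 d = qnorm2 a.
Proof.
by move=> gSp; have [-> -> _] := Sp11_entries gSp; rewrite (Sp11_norm_offdiag gSp) addrC.
Qed.

Lemma Sp11_mulVg g : in_Sp11 g -> mmul (sp_inv g) g = mone R.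
Proof. by rewrite /sp_inv -!mmulA (mmulA (mstar g)) => ->; rewrite I11_mul. Qed.

Lemma Sp11_inv_unique g gi : in_Sp11 g -> mmul g gi = mone R -> gi = sp_inv g.
Proof. by move=> gSp ggi; rewrite -[gi]mmul1g -(Sp11_mulVg gSp) -mmulA ggi mmulg1. Qed.

Lemma Sp11_mulgV g : in_Sp11 g -> mmul g (sp_inv g) = mone R.
Proof.
case: g => a b c d gSp; have hbc := Sp11_norm_offdiag gSp; have hda := Sp11_norm_diag gSp.
have [ha _ hab] := Sp11_entries gSp.
set P := qsub (qmul b (qconj d)) (qmul a (qconj c)).
have aP : qmul (quatR (qnorm2 a)) P =
    qadd (qmul (qmul a (qsub (qmul (qconj a) b) (qmul (qconj c) d))) (qconj d))
         (qmul (quatR (qnorm2 d - qnorm2 a)) (qmul a (qconj c))) by rewrite /P; quat_ring.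
rewrite hab hda subrr in aP.
have P0 : P = qzero R.
  apply: (@qmulR_eq0 (qnorm2 a)); first by rewrite ha; have := qnorm2_ge0 c; lra.
  by rewrite aP; quat_ring.
rewrite sp_invE.
have -> : mmul (Mat2 a b c d) (Mat2 (qconj a) (qopp (qconj c)) (qopp (qconj b)) (qconj d)) =
  Mat2 (quatR (qnorm2 a - qnorm2 b)) P (qopp (qconj P)) (quatR (qnorm2 d - qnorm2 c)).
  by rewrite /P; quat_ring.
by rewrite P0 hda ha hbc; quat_ring.
Qed.

Ltac case_mcomplex u :=
  case: u => [[? ? ? ?] [? ? ? ?] [? ? ? ?] [? ? ? ?]];
  rewrite /mcomplex /qcomplex /= => -[[-> ->] [[-> ->] [[-> ->] [-> ->]]]].

Lemma mcomplex_mul_adj u : mcomplex u -> mmul u (madj u) = mscal (mdet u).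
Proof. case_mcomplex u; quat_ring. Qed.

Lemma mtrace_conj_adj u v : mcomplex u -> mcomplex v ->
  mtrace (mmul (mmul u v) (madj u)) = qmul (mdet u) (mtrace v).
Proof. case_mcomplex u; case_mcomplex v; quat_ring. Qed.

Lemma mdet_mscal e g : qcomplex e -> mcomplex g ->
  mdet (mmul (mscal e) g) = qmul (qmul e e) (mdet g).
Proof. case: e => ? ? ? ?; rewrite /qcomplex /= => -[-> ->]; case_mcomplex g; quat_ring. Qed.

Lemma SU11_sp_inv u : in_SU11 u -> sp_inv u = madj u.
Proof.
case=> uC udet uSp; apply/esym/(Sp11_inv_unique uSp).
by rewrite mcomplex_mul_adj // /mdet udet.
Qed.

Lemma SU11_trace_real v : in_SU11 v -> qreal (mtrace v).
Proof.
case: v => [[p0 p1 p2 p3] [w0 w1 w2 w3] [r0 r1 r2 r3] [s0 s1 s2 s3]].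
move=> [[[/= hp2 hp3] [[/= hw2 hw3] [[/= hr2 hr3] [/= hs2 hs3]]]] Hd HI].
subst p2 p3 w2 w3 r2 r3 s2 s3.
move: HI; rewrite /in_Sp11 /= => -[e1 _ _ _ f0 f1 _ _ _ _ _ _ _ _ _ _].
have g0 := congr1 (@q0 R) Hd; have g1 := congr1 (@q1 R) Hd; simpl in g0, g1.
rewrite /qreal /=; split; last by split; ring.
have E : p0 ^+ 2 + p1 ^+ 2 - r0 ^+ 2 - r1 ^+ 2 - 1 = 0 by lra.
have G0 : p0 * s0 - p1 * s1 - w0 * r0 + w1 * r1 - 1 = 0 by lra.
have G1 : p0 * s1 + p1 * s0 - w0 * r1 - w1 * r0 = 0 by lra.
have F0 : p0 * w0 + p1 * w1 - r0 * s0 - r1 * s1 = 0 by lra.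
have F1 : p0 * w1 - p1 * w0 - r0 * s1 + r1 * s0 = 0 by lra.
have -> : p1 + s1 =
    - s1 * (p0 ^+ 2 + p1 ^+ 2 - r0 ^+ 2 - r1 ^+ 2 - 1)
    + p0 * (p0 * s1 + p1 * s0 - w0 * r1 - w1 * r0)
    - p1 * (p0 * s0 - p1 * s1 - w0 * r0 + w1 * r1 - 1)
    + r0 * (p0 * w1 - p1 * w0 - r0 * s1 + r1 * s0)
    + r1 * (p0 * w0 + p1 * w1 - r0 * s0 - r1 * s1) by ring.
by rewrite E G0 G1 F0 F1; ring.
Qed.

Lemma SU11_conj_trace_real u : in_SU11 u -> conj_trace_real u.
Proof.
move=> uSU v vSU; have [uC udet _] := uSU; have [vC _ _] := vSU.
rewrite SU11_sp_inv // mtrace_conj_adj // /mdet udet qmul1q.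
exact: SU11_trace_real.
Qed.

Lemma conj_trace_real_mscal h g : conj_trace_real g -> conj_trace_real (mmul (mscal h) g).
Proof.
move=> gT v vSU; rewrite sp_inv_mscal.
have -> : mmul (mmul (mmul (mscal h) g) v) (mmul (sp_inv g) (mscal (qconj h))) =
  mmul (mmul (mscal h) (mmul (mmul g v) (sp_inv g))) (mscal (qconj h)) by rewrite !mmulA.
by rewrite mtrace_mscal; apply/qreal_conjg/gT.
Qed.

Lemma Sp11_complex_det g : mcomplex g -> in_Sp11 g ->
  qcomplex (mdet g) /\ qnorm2 (mdet g) = 1.
Proof.
case: g => a b c d [aC [bC [cC dC]]] gSp; split.
  move: aC bC cC dC; clear gSp; rewrite /mdet.
  case: a b c d => ? ? ? ? [? ? ? ?] [? ? ? ?] [? ? ? ?].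
  by rewrite /qcomplex /= => -[-> ->] [-> ->] [-> ->] [-> ->]; split; ring.
have [ha _ hab] := Sp11_entries gSp; have hda := Sp11_norm_diag gSp.
have adet : qmul (qconj a) (mdet (Mat2 a b c d)) = d.
  have -> : qmul (qconj a) (mdet (Mat2 a b c d)) =
    qsub (qmul (quatR (qnorm2 a)) d) (qmul (qmul (qconj a) b) c) by quat_ring.
  by rewrite hab -qmulA (qcomplex_mulC dC cC) qmulA qmul_conjl ha; quat_ring.
have a0 : qnorm2 a != 0 by rewrite ha; have := qnorm2_ge0 c; lra.
apply: (mulfI a0); rewrite mulr1 -{2}hda -qnorm2_conj -qnorm2_mul.
by rewrite adet.
Qed.

Lemma Sp11_complex_phase g : mcomplex g -> in_Sp11 g ->
  exists e, unit_quat e /\ in_SU11 (mmul (mscal e) g).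
Proof.
move=> gC gSp; have [detC det1] := Sp11_complex_det gC gSp.
have [e [eC eU ee]] := complex_unit_sqrt detC det1.
exists e; split=> //; split; last exact: in_Sp11_mscal.
  rewrite mscal_mulE; case: gC => [aC [bC [cC dC]]].
  by split; [|split; [|split]]; apply: qcomplex_mul.
by change (mdet (mmul (mscal e) g) = qone R); rewrite mdet_mscal.
Qed.

Definition su11_ex1 := Mat2 qi (qzero R) (qzero R) (qopp qi).
Definition su11_ex2 := Mat2 (Quat 1 1 0 0) (qone R) (qone R) (Quat 1 (-1) 0 0).
Definition su11_ex3 := Mat2 (Quat 1 1 0 0) qi (qopp qi) (Quat 1 (-1) 0 0).

Ltac su11_check := split; [by rewrite /mcomplex /qcomplex /= ?oppr0 | quat_ring | quat_ring].

Lemma su11_ex1_SU11 : in_SU11 su11_ex1.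
Proof. su11_check. Qed.

Lemma su11_ex2_SU11 : in_SU11 su11_ex2.
Proof. su11_check. Qed.

Lemma su11_ex3_SU11 : in_SU11 su11_ex3.
Proof. su11_check. Qed.

Lemma real_corner_trace_commutators r b c d :
  qmul (quatR r) b = qmul (qconj c) d -> conj_trace_real (Mat2 (quatR r) b c d) ->
  qreal (qcomm (qconj c) d) /\ qreal (qcomm (qmul qi (qconj d)) c).
Proof.
move=> hb gT; move: (gT _ su11_ex1_SU11) (gT _ su11_ex2_SU11) (gT _ su11_ex3_SU11) hb.
clear gT; rewrite sp_invE /qcomm /qreal /quatR /qi.
case: b c d => b0 b1 b2 b3 [c0 c1 c2 c3] [d0 d1 d2 d3] /=.
move=> [x1 [x2 x3]] [y1 [y2 y3]] [z1 [z2 z3]] [e0 e1 e2 e3].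
by split; [clear z1 z2 z3 | clear y1 y2 y3]; repeat split; lra.
Qed.

Lemma commutators_real_complex c d : 0 < qnorm2 d ->
  qreal (qcomm (qconj c) d) -> qreal (qcomm (qmul qi (qconj d)) c) ->
  qcomplex c /\ (qreal c \/ qcomplex d).
Proof.
case: c d => c0 c1 c2 c3 [d0 d1 d2 d3].
rewrite /qreal /qcomplex /qcomm /qnorm2 /qi /= => dpos [X1 [X2 X3]] [Y1 [Y2 Y3]].
have x1 : c2 * d3 - c3 * d2 = 0 by lra.
have x2 : c3 * d1 - c1 * d3 = 0 by lra.
have x3 : c1 * d2 - c2 * d1 = 0 by lra.
have y1 : c2 * d2 + c3 * d3 = 0 by lra.
have y2 : d0 * c3 + c1 * d2 = 0 by lra.
have y3 : d0 * c2 - c1 * d3 = 0 by lra.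
have s0 : c2 ^+ 2 + c3 ^+ 2 = 0.
  apply/eqP/negPn/negP => sn0.
  have dk0 (dk : R) : dk * (c2 ^+ 2 + c3 ^+ 2) = 0 -> dk = 0.
    by move/eqP; rewrite mulf_eq0 (negPf sn0) orbF => /eqP.
  have e0 : d0 = 0.
    apply: dk0; transitivity
      (c2 * (d0 * c2 - c1 * d3) + c3 * (d0 * c3 + c1 * d2) + c1 * (c2 * d3 - c3 * d2)).
      by ring.
    by rewrite y3 y2 x1; ring.
  have e1 : d1 = 0.
    apply: dk0; transitivity
      (c1 * (c2 * d2 + c3 * d3) - c2 * (c1 * d2 - c2 * d1) + c3 * (c3 * d1 - c1 * d3)).
      by ring.
    by rewrite y1 x3 x2; ring.
  have e2 : d2 = 0.
    apply: dk0; transitivity (c2 * (c2 * d2 + c3 * d3) - c3 * (c2 * d3 - c3 * d2)).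
      by ring.
    by rewrite y1 x1; ring.
  have e3 : d3 = 0.
    apply: dk0; transitivity (c3 * (c2 * d2 + c3 * d3) + c2 * (c2 * d3 - c3 * d2)).
      by ring.
    by rewrite y1 x1; ring.
  by move: dpos; rewrite e0 e1 e2 e3; lra.
move/eqP: s0; rewrite paddr_eq0 ?sqr_ge0 // !sqrf_eq0 => /andP [/eqP c2z /eqP c3z].
subst c2 c3; split=> //.
have [c1z | c1n] := eqVneq c1 0; [by left | right].
by split; apply: (mulfI c1n); lra.
Qed.

Lemma real_first_column_complex (r s : R) b d :
  in_Sp11 (Mat2 (quatR r) b (quatR s) d) ->
  conj_trace_real (Mat2 (quatR r) b (quatR s) d) -> qcomplex d.
Proof.
move=> gSp gT; have := gT _ su11_ex1_SU11; have := Sp11_norm_diag gSp.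
have [ha _ hab] := Sp11_entries gSp; clear gT gSp; move: ha hab.
rewrite sp_invE !qnorm2_quatR /qreal /qcomplex /qnorm2 /quatR.
case: b d => b0 b1 b2 b3 [d0 d1 d2 d3] /= ha [e0 e1 e2 e3] hd [x1 _].
set B := b0 ^+ 2 + b1 ^+ 2 - b2 ^+ 2 - b3 ^+ 2.
set Q := d0 ^+ 2 + d1 ^+ 2 - d2 ^+ 2 - d3 ^+ 2.
have hBQ : r ^+ 2 * B = s ^+ 2 * Q.
  transitivity ((r * b0) ^+ 2 + (r * b1) ^+ 2 - (r * b2) ^+ 2 - (r * b3) ^+ 2).
    by rewrite /B; ring.
  have -> : r * b0 = s * d0 by lra.
  have -> : r * b1 = s * d1 by lra.
  have -> : r * b2 = s * d2 by lra.
  have -> : r * b3 = s * d3 by lra.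
  by rewrite /Q; ring.
have hX : r ^+ 2 + B - s ^+ 2 - Q = 0 by rewrite /B /Q; lra.
have hQ : Q = r ^+ 2.
  have key : (r ^+ 2 - s ^+ 2) * (r ^+ 2 - Q) =
    r ^+ 2 * (r ^+ 2 + B - s ^+ 2 - Q) - (r ^+ 2 * B - s ^+ 2 * Q) by ring.
  have h1 : r ^+ 2 - s ^+ 2 = 1 by lra.
  by rewrite hX hBQ h1 in key; lra.
have : d2 ^+ 2 + d3 ^+ 2 = 0 by move: hQ; rewrite /Q; lra.
by move/eqP; rewrite paddr_eq0 ?sqr_ge0 // !sqrf_eq0 => /andP [/eqP -> /eqP ->].
Qed.

Lemma Sp11_real_corner_complex r b c d :
  in_Sp11 (Mat2 (quatR r) b c d) -> conj_trace_real (Mat2 (quatR r) b c d) ->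
  mcomplex (Mat2 (quatR r) b c d).
Proof.
move=> gSp gT; have [ha hd hab] := Sp11_entries gSp.
have {}hab : qmul (quatR r) b = qmul (qconj c) d by rewrite -hab; quat_ring.
have r0 : r != 0.
  by apply/eqP=> r0; move: ha; rewrite qnorm2_quatR r0; have := qnorm2_ge0 c; lra.
have d0 : 0 < qnorm2 d by rewrite hd; have := qnorm2_ge0 b; lra.
have [Kc Zc] := real_corner_trace_commutators hab gT.
have [cC cR_dC] := commutators_real_complex d0 Kc Zc.
have dC : qcomplex d.
  case: cR_dC => // cR; move: gSp gT.
  have -> : c = quatR (q0 c).
    by case: c {cC Kc Zc hab ha} cR => ? ? ? ?; rewrite /qreal /= => -[-> [-> ->]].
  exact: real_first_column_complex.
split; [by [] | split; [|by []]].
by apply: (qcomplex_mulR r0); rewrite hab; apply: qcomplex_mul (qcomplex_conj cC) dC.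
Qed.

Lemma Sp11_conj_trace_real_decomp g : in_Sp11 g -> conj_trace_real g ->
  exists h u, unit_quat h /\ in_SU11 u /\ g = mmul (mscal h) u.
Proof.
move=> gSp gT.
have a0 : 0 < qnorm2 (m11 g).
  by case: g gSp {gT} => a b c d /Sp11_entries [-> _ _]; have := qnorm2_ge0 c; lra.
have [h1 [h1U h1a]] := quat_unit_align a0.
set g1 := mmul (mscal h1) g.
have g1Sp : in_Sp11 g1 by apply: in_Sp11_mscal.
have g1C : mcomplex g1.
  move: g1Sp (conj_trace_real_mscal h1 gT); rewrite /g1 mscal_mulE h1a.
  exact: Sp11_real_corner_complex.
have [e [eU uSU]] := Sp11_complex_phase g1C g1Sp.
have ehU : unit_quat (qmul e h1) by apply: unit_quat_mul.
exists (qconj (qmul e h1)), (mmul (mscal e) g1).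
split; first exact: unit_quat_conj.
split=> //; rewrite /g1 !mmulA !mscal_mul -(qmulA _ e) qmul_conjl.
by rewrite (_ : qnorm2 _ = 1) // mmul1g.
Qed.

End Sp11Conjugation.

Theorem proposition4p3 (R : realType) (g : mat2 R) :
  in_Sp11 g ->
  ((forall u : mat2 R, in_SU11 u ->
      forall gi : mat2 R, mmul g gi = mone R -> mmul gi g = mone R ->
        qreal (mtrace (mmul (mmul g u) gi)))
   <->
   (exists h : quat R, exists u : mat2 R,
      unit_quat h /\ in_SU11 u /\ g = mmul (mscal h) u)).
Proof.
move=> gSp; split=> [gT | [h [u [_ [uSU gE]]]] v vSU gi ggi _].
  apply: Sp11_conj_trace_real_decomp => // v vSU.
  exact: gT vSU _ (Sp11_mulgV gSp) (Sp11_mulVg gSp).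
rewrite (Sp11_inv_unique gSp ggi) gE.
exact: conj_trace_real_mscal (SU11_conj_trace_real uSU) _ vSU.
Qed.
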